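(* For any nonempty rooted trees $a$ and $b$, $\omega(a\bowtie b)=0$.
   Context: Let $k$ be a field of characteristic $0$. $\mathcal H_{CK}$ is the Connes–Kreimer Hopf algebra of rooted forests (free commutative algebra on nonempty non-planar rooted trees, unit the empty forest, counit $\varepsilon$, coproduct by admissible cuts $\Delta_{CK}(u)=\sum v\otimes w$ over decompositions of the vertex set of $u$ into $V\sqcup W$ with no vertex of $V$ strictly below a vertex of $W$, $v,w$ the induced forests), with convolution $*$. $\delta$ is the character of $\mathcal H_{CK}$ with $\delta(\bullet)=1$ ($\bullet$ the one-vertex tree) and $\delta(t)=0$ for trees with at least two vertices, and $\omega=\log^*\delta=\sum_{n\ge1}\frac{(-1)^{n+1}}{n}(\delta-\varepsilon)^{*n}$. For trees $a=B_+(a_1\cdots a_n)$, $b=B_+(b_1\cdots b_p)$ (where $B_+$ grafts a forest onto a new root): $a\circ b=B_+(a_1\cdots a_nb)$, $a\times b=B_+(a_1\cdots a_nb_1\cdots b_p)$, and $a\bowtie b=a\circ b+b\circ a+a\times b$. *)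

(* Connes-Kreimer Hopf algebra of rooted forests, evaluated
   combinatorially on (planar representatives of) forests. *)
From HB Require Import structures.
From mathcomp Require Import all_boot all_order all_algebra.
Set Implicit Arguments. Unset Strict Implicit. Unset Printing Implicit Defensive.
Import GRing.Theory.
Local Open Scope ring_scope.

(* Rooted trees: a root with a (finite) forest of subtrees grafted on it,
   i.e. t = B_+(t_1 ... t_n).  Every tree is nonempty (has a root). *)
Inductive tree : Type := Node of seq tree.
Definition forest := seq tree.

Definition Bplus (f : forest) : tree := Node f.

Fixpoint tsize (t : tree) : nat := let: Node cs := t in (sumn (map tsize cs)).+1.
Definition fsize (u : forest) : nat := sumn (map tsize u).

(* Vertices of a forest are numbered 0 .. fsize u - 1 in preorder.
   ancsT t off A lists, for each vertex of t (in preorder, t's root having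
   number off), the list of the numbers of its strict ancestors (A being the
   strict ancestors of the root of t). *)
Fixpoint ancsT (t : tree) (off : nat) (A : seq nat) {struct t} : seq (seq nat) :=
  let: Node cs := t in
  let fix go (cs : seq tree) (o : nat) : seq (seq nat) :=
    if cs is c :: cs' then
      let l := ancsT c o (off :: A) in l ++ go cs' (o + size l)
    else [::] in
  A :: go cs off.+1.

Fixpoint ancsF_from (u : forest) (o : nat) : seq (seq nat) :=
  if u is t :: u' then
    let l := ancsT t o [::] in l ++ ancsF_from u' (o + size l)
  else [::].

Definition ancsF (u : forest) : seq (seq nat) := ancsF_from u 0.

(* x is strictly below y (x is a strict ancestor of y; roots at the bottom) *)
Definition strictly_below (u : forest) (x y : nat) : bool :=
  x \in nth [::] (ancsF u) y.

(* Induced subforest on the vertices selected by a bit mask (in preorder):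
   kept vertices keep their kept descendants, with the induced order. *)
Fixpoint restrT (t : tree) (m : bitseq) {struct t} : forest * bitseq :=
  let: Node cs := t in
  let fix go (cs : seq tree) (m : bitseq) : forest * bitseq :=
    if cs is c :: cs' then
      let: (f1, m1) := restrT c m in
      let: (f2, m2) := go cs' m1 in (f1 ++ f2, m2)
    else ([::], m) in
  let: (F', m') := go cs (behead m) in
  (if head false m then [:: Node F'] else F', m').

Fixpoint restrF (u : forest) (m : bitseq) : forest * bitseq :=
  if u is t :: u' then
    let: (f1, m1) := restrT t m in
    let: (f2, m2) := restrF u' m1 in (f1 ++ f2, m2)
  else ([::], m).

Definition induced (u : forest) (S : {set 'I_(fsize u)}) : forest :=
  (restrF u [seq i \in S | i <- enum 'I_(fsize u)]).1.

(* Admissible decomposition V ⊔ W of the vertex set (W given, V = ~: W):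
   no vertex of V strictly below a vertex of W. *)
Definition admissible (u : forest) (W : {set 'I_(fsize u)}) : bool :=
  [forall x : 'I_(fsize u), forall y : 'I_(fsize u),
     ~~ [&& x \notin W, y \in W & strictly_below u x y]].

Section Conv.
Variable F : fieldType.

(* Convolution: (f * g)(u) = sum over Delta_CK(u) = sum v (x) w of f(v) g(w),
   v = induced forest on V, w = induced forest on W. *)
Definition conv (f g : forest -> F) (u : forest) : F :=
  \sum_(W : {set 'I_(fsize u)} | admissible W)
     f (induced (~: W)) * g (induced W).

Definition epsilon (u : forest) : F := if u is [::] then 1 else 0.

Definition deltaT (t : tree) : F := if t is Node [::] then 1 else 0.
Definition delta (u : forest) : F := \prod_(t <- u) deltaT t.

Fixpoint convpow (f : forest -> F) (n : nat) : forest -> F :=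
  if n is n'.+1 then conv f (convpow f n') else epsilon.

(* omega = log^* delta = sum_{n>=1} (-1)^{n+1}/n (delta - epsilon)^{*n};
   on a forest u the terms with n > fsize u vanish, so the sum is finite. *)
Definition omega (u : forest) : F :=
  \sum_(1 <= n < (fsize u).+1)
     ((-1) ^+ n.+1 / n%:R) * convpow (fun v => delta v - epsilon v) n u.

(* linear extension of omega to formal linear combinations (here sums)
   of forests *)
Definition omega_lin (x : seq forest) : F := \sum_(u <- x) omega u.
End Conv.

Definition circ (a b : tree) : tree :=
  let: Node as_ := a in Node (rcons as_ b).
Definition times (a b : tree) : tree :=
  let: Node as_ := a in let: Node bs := b in Node (as_ ++ bs).

Definition bowtie (a b : tree) : seq forest :=
  [:: [:: circ a b]; [:: circ b a]; [:: times a b]].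

From mathcomp Require Import all_boot all_order all_algebra zify ring.
Set Implicit Arguments. Unset Strict Implicit. Unset Printing Implicit Defensive.
Import GRing.Theory.

(* Write Phi_m = delta^{*m}.  Since delta = epsilon + (delta - epsilon) and
   delta - epsilon is locally nilpotent, Phi_m(u) = sum_n C(m, n) (delta -
   epsilon)^{*n}(u) is a polynomial P_u in m, and omega(u) = P_u'(0) because
   the n-th binomial polynomial has derivative (-1)^(n+1)/n at 0.  As
   Delta_CK is multiplicative and Delta_CK(B_+ f) = B_+ f (x) 1 +
   (id (x) B_+) Delta_CK(f), every Phi_m is a character with
   Phi_m(B_+ f) = sum_(j < m) Phi_j(f); splitting a product of two such sums
   gives Phi_m(a o b) + Phi_m(b o a) + Phi_m(a x b) = Phi_m(a) Phi_m(b) for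
   all m, hence the same identity between the polynomials.  Differentiating
   at 0 and using P_a(0) = Phi_0(a) = epsilon(a) = 0 yields the theorem. *)

Lemma forest_ind (Q : forest -> Prop) :
  Q [::] -> (forall t u, Q [:: t] -> Q u -> Q (t :: u)) ->
  (forall cs, Q cs -> Q [:: Node cs]) -> forall u, Q u.
Proof.
move=> Qnil Qcons Qnode.
pose fix Qtree (t : tree) : Q [:: t] :=
  let: Node cs := t in
  Qnode cs ((fix go (u : forest) : Q u :=
      if u is c :: u' return Q u then Qcons c u' (Qtree c) (go u') else Qnil) cs).
by elim=> [|t u IH] //; apply: Qcons (Qtree t) IH.
Qed.

Fixpoint ancs_from (u : forest) (o : nat) (B : seq nat) : seq (seq nat) :=
  if u is t :: u' then ancsT t o B ++ ancs_from u' (o + size (ancsT t o B)) B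
  else [::].

Lemma ancsT_Node cs o A : ancsT (Node cs) o A = A :: ancs_from cs o.+1 (o :: A).
Proof. by rewrite /=; congr (_ :: _); elim: cs o.+1 => //= c cs IH o'; rewrite IH. Qed.

Lemma ancs_from1 t o B : ancs_from [:: t] o B = ancsT t o B.
Proof. exact: cats0. Qed.

Lemma ancsFE u : ancsF u = ancs_from u 0 [::].
Proof. by rewrite /ancsF; elim: u 0 => //= t u IH o; rewrite IH. Qed.

Lemma fsize_cons t u : fsize (t :: u) = tsize t + fsize u.
Proof. by []. Qed.

Lemma fsize_cat u v : fsize (u ++ v) = fsize u + fsize v.
Proof. by rewrite /fsize map_cat sumn_cat. Qed.

Lemma fsize1 t : fsize [:: t] = tsize t.
Proof. exact: addn0. Qed.

Lemma fsize_Node cs : fsize [:: Node cs] = (fsize cs).+1.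
Proof. by rewrite /fsize /= addn0. Qed.

Lemma size_ancs_from u o B : size (ancs_from u o B) = fsize u.
Proof.
elim/forest_ind: u o B => [//|t u IHt IHu|cs IH] o B.
  by rewrite /= size_cat IHu -ancs_from1 IHt fsize1.
by rewrite ancs_from1 ancsT_Node /= IH fsize_Node.
Qed.

Definition relabel (o : nat) (B l : seq nat) : seq nat := map (addn o) l ++ B.

Lemma ancs_from_relabel u o B :
  ancs_from u o B = map (relabel o B) (ancs_from u 0 [::]).
Proof.
have relabelA o1 o2 B1 l : relabel o1 B1 (relabel o2 [::] l) = relabel (o1 + o2) B1 l.
  by rewrite /relabel cats0 -map_comp; congr (_ ++ _); apply: eq_map => x /=; rewrite addnA.
elim/forest_ind: u o B => [//|t u IHt IHu|cs IH] o B.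
  rewrite /= -!ancs_from1 IHt !size_map !size_ancs_from IHu [in RHS]IHu map_cat.
  by congr (_ ++ _); rewrite -map_comp; apply: eq_map => l /=; rewrite relabelA.
rewrite !ancs_from1 !ancsT_Node IH [in RHS]IH /= -map_comp; congr (_ :: _).
apply: eq_map => l /=; rewrite /relabel map_cat -catA -map_comp /= addn0.
by congr (_ ++ _); apply: eq_map => x /=; rewrite addnA addn1.
Qed.

Lemma size_ancsF u : size (ancsF u) = fsize u.
Proof. by rewrite ancsFE size_ancs_from. Qed.

Lemma ancsF_cons t u :
  ancsF (t :: u) = ancsF [:: t] ++ map (map (addn (tsize t))) (ancsF u).
Proof.
rewrite !ancsFE /= ancs_from_relabel cats0 add0n -ancs_from1 size_ancs_from.
by congr (_ ++ _); apply: eq_map => l; rewrite /relabel cats0 fsize1.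
Qed.

Lemma ancsF_Node cs :
  ancsF [:: Node cs] = [::] :: map (fun l => map S l ++ [:: 0]) (ancsF cs).
Proof.
by rewrite !ancsFE ancs_from1 ancsT_Node ancs_from_relabel.
Qed.

Lemma ancsF_bound u : all (all (fun x => x < fsize u)) (ancsF u).
Proof.
elim/forest_ind: u => [//|t u IHt IHu|cs IH].
  rewrite ancsF_cons all_cat all_map fsize_cons; apply/andP; split.
    apply: sub_all IHt => l; apply: sub_all => x /= h.
    by apply: leq_trans h _; rewrite fsize1 leq_addr.
  by apply: sub_all IHu => l /=; rewrite all_map; apply: sub_all => x /=; rewrite ltn_add2l.
rewrite ancsF_Node fsize_Node /= all_map; apply: sub_all IH => l /=.
by rewrite all_cat all_map /= andbT.
Qed.

Lemma split_mask (m : bitseq) k l : size m = k + l ->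
  exists m1 m2, [/\ m = m1 ++ m2, size m1 = k & size m2 = l].
Proof.
move=> sm; exists (take k m), (drop k m).
by rewrite cat_take_drop size_takel ?size_drop sm ?addKn ?leq_addr.
Qed.

Lemma restrF1 t m : restrF [:: t] m = restrT t m.
Proof. by rewrite /=; case: (restrT t m) => f m'; rewrite cats0. Qed.

Lemma restrF_Node cs m : restrF [:: Node cs] m =
  let: (F', m') := restrF cs (behead m) in (if head false m then [:: Node F'] else F', m').
Proof.
rewrite restrF1 /=; suff -> : forall m',
    (fix go cs m := if cs is c :: cs' then
       let: (f1, m1) := restrT c m in let: (f2, m2) := go cs' m1 in (f1 ++ f2, m2)
     else ([::], m)) cs m' = restrF cs m' by [].
by elim: cs => //= c cs IH m'; case: (restrT c m') => f1 m1; rewrite IH.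
Qed.

Lemma restrF_cat u m r : size m = fsize u -> restrF u (m ++ r) = ((restrF u m).1, r).
Proof.
elim/forest_ind: u m r => [|t u IHt IHu|cs IH] m r.
- by move/size0nil->.
- rewrite fsize_cons => /split_mask [m1 [m2 [-> s1 s2]]].
  rewrite -catA /= -!restrF1 !IHt ?fsize1 //= IHu //; by case: (restrF u m2).
case: m => [|b m] //; rewrite fsize_Node => -[sm].
by rewrite !restrF_Node /= IH //; case: (restrF cs m).
Qed.

Lemma restrF_cons t u m1 m2 : size m1 = tsize t ->
  (restrF (t :: u) (m1 ++ m2)).1 = (restrF [:: t] m1).1 ++ (restrF u m2).1.
Proof.
move=> s1; rewrite [LHS]/= -restrF1 restrF_cat ?fsize1 //=.
by case: (restrF u m2).
Qed.

Lemma restrF_Node_cons cs b m : (restrF [:: Node cs] (b :: m)).1 =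
  if b then [:: Node (restrF cs m).1] else (restrF cs m).1.
Proof. by rewrite restrF_Node /=; case: (restrF cs m); case: b. Qed.

Lemma restrF_nseq (b : bool) u :
  (restrF u (nseq (fsize u) b)).1 = if b then u else [::].
Proof.
elim/forest_ind: u => [|t u IHt IHu|cs IH]; first by case: b.
  by rewrite fsize_cons nseqD restrF_cons ?size_nseq // -fsize1 IHt IHu; case: b {IHt IHu}.
by rewrite fsize_Node /= restrF_Node_cons IH; case: b {IH}.
Qed.

Lemma fsize_restrF u m : size m = fsize u -> fsize (restrF u m).1 = count id m.
Proof.
elim/forest_ind: u m => [|t u IHt IHu|cs IH] m.
- by move/size0nil->.
- rewrite fsize_cons => /split_mask [m1 [m2 [-> s1 s2]]].
  by rewrite restrF_cons // fsize_cat IHt ?fsize1 // IHu // count_cat.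
case: m => [|b m] //; rewrite fsize_Node => -[sm].
by rewrite restrF_Node_cons; case: b; rewrite /= ?fsize_Node IH.
Qed.

Lemma fsize_restrF_split u m : size m = fsize u ->
  fsize (restrF u (map negb m)).1 + fsize (restrF u m).1 = fsize u.
Proof.
move=> sm; rewrite !fsize_restrF ?size_map // count_map addnC.
by rewrite -[X in _ = X]sm -(count_predC id).
Qed.

Lemma restrF_nil u m : size m = fsize u -> (restrF u m).1 = [::] -> m = nseq (fsize u) false.
Proof.
move=> sm /(congr1 fsize); rewrite fsize_restrF // -sm => none.
have : ~~ has id m by rewrite has_count none.
by rewrite -all_predC => all_false; apply/all_pred1P; apply: sub_all all_false => -[].
Qed.

Fixpoint masks (n : nat) : seq bitseq :=
  if n is n'.+1 then map (cons true) (masks n') ++ map (cons false) (masks n')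
  else [:: [::]].

Lemma mem_map_cons (b c : bool) m s : (b :: m \in map (cons c) s) = (b == c) && (m \in s).
Proof. by apply/mapP/andP => [[y ys [-> ->]] | [/eqP -> ms]] //; exists m. Qed.

Lemma mem_masks n m : (m \in masks n) = (size m == n).
Proof.
elim: n m => [|n IH] [|b m] //=; rewrite mem_cat ?mem_map_cons ?IH //.
by apply/negbTE; rewrite negb_or; apply/andP; split; apply/mapP => -[].
by case: b; rewrite /= ?orbF.
Qed.

Lemma uniq_masks n : uniq (masks n).
Proof.
elim: n => //= n IH; rewrite cat_uniq !map_inj_uniq ?IH //=; try by move=> x y [].
by rewrite andbT; apply/hasPn => x /mapP [y _ ->]; rewrite mem_map_cons.
Qed.

Definition mask_of n (W : {set 'I_n}) : bitseq := [seq i \in W | i <- enum 'I_n].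

Lemma size_mask_of n (W : {set 'I_n}) : size (mask_of W) = n.
Proof. by rewrite size_map size_enum_ord. Qed.

Lemma nth_mask_of n (W : {set 'I_n}) (i : 'I_n) : nth false (mask_of W) i = (i \in W).
Proof. by rewrite (nth_map i) ?size_enum_ord // nth_ord_enum. Qed.

Lemma mask_of_setC n (W : {set 'I_n}) : mask_of (~: W) = map negb (mask_of W).
Proof. by rewrite /mask_of -map_comp; apply: eq_map => i /=; rewrite inE. Qed.

Lemma sum_sets_masks (R : nmodType) n (H : bitseq -> R) :
  (\sum_(W : {set 'I_n}) H (mask_of W) = \sum_(m <- masks n) H m)%R.
Proof.
have mask_of_inj : injective (@mask_of n).
  by move=> W1 W2 e; apply/setP => i; rewrite -!nth_mask_of e.
rewrite -(big_map (@mask_of n) xpredT H); apply: perm_big.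
apply: uniq_perm; rewrite ?map_inj_uniq ?index_enum_uniq ?uniq_masks //.
move=> m; rewrite mem_masks; apply/mapP/eqP => [[W _ ->]|sm]; first exact: size_mask_of.
exists [set i : 'I_n | nth false m i]; first by rewrite mem_index_enum.
apply: (@eq_from_nth _ false); rewrite ?size_mask_of // => i; rewrite sm => lt.
by rewrite -[i]/(nat_of_ord (Ordinal lt)) nth_mask_of inE.
Qed.

Definition adm_mask (anc : seq (seq nat)) (m : bitseq) : bool :=
  all (fun y => nth false m y ==>
         all (fun x => (x < size m) ==> nth false m x) (nth [::] anc y))
      (iota 0 (size m)).

Lemma admissibleE u (W : {set 'I_(fsize u)}) :
  admissible W = adm_mask (ancsF u) (mask_of W).
Proof.
apply/forallP/allP => [H y | H x].
  rewrite mem_iota add0n size_mask_of => ylt; apply/implyP.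
  rewrite -[y]/(nat_of_ord (Ordinal ylt)) nth_mask_of => yW.
  apply/allP => x xin; apply/implyP => xlt; rewrite -[x]/(nat_of_ord (Ordinal xlt)).
  have /forallP/(_ (Ordinal ylt)) := H (Ordinal xlt).
  by rewrite nth_mask_of yW /strictly_below xin !andbT => /negPn.
apply/forallP => y; apply/negP => /and3P [xW yW below].
have := H y; rewrite mem_iota add0n size_mask_of ltn_ord nth_mask_of yW.
by move=> /(_ isT) /allP /(_ x below); rewrite ltn_ord nth_mask_of (negbTE xW).
Qed.

Definition cut_sum (R : nmodType) (u : forest) (G : forest -> forest -> R) : R :=
  (\sum_(m <- masks (fsize u) | adm_mask (ancsF u) m)
     G (restrF u (map negb m)).1 (restrF u m).1)%R.

Lemma conv_cut_sum (F : fieldType) (f g : forest -> F) u :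
  conv f g u = cut_sum u (fun v w => f v * g w)%R.
Proof.
rewrite /conv /cut_sum big_mkcond [RHS]big_mkcond /= -sum_sets_masks.
by apply: eq_bigr => W _; rewrite admissibleE /induced -mask_of_setC.
Qed.

Lemma adm_mask_nseq anc n (b : bool) : adm_mask anc (nseq n b).
Proof.
apply/allP => y _; rewrite nth_nseq; case: b; rewrite ?if_same //.
apply/implyP => _; apply/allP => x _; apply/implyP => xn.
by rewrite nth_nseq -(size_nseq n true) xn.
Qed.

Lemma adm_mask_cons t u m1 m2 : size m1 = tsize t -> size m2 = fsize u ->
  adm_mask (ancsF (t :: u)) (m1 ++ m2) =
  adm_mask (ancsF [:: t]) m1 && adm_mask (ancsF u) m2.
Proof.
move=> s1 s2; have sA1 : size (ancsF [:: t]) = tsize t by rewrite size_ancsF fsize1.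
have in_t y x : x \in nth [::] (ancsF [:: t]) y -> x < tsize t.
  case: (ltnP y (size (ancsF [:: t]))) => yl; last by rewrite nth_default.
  move=> xin; have /allP /(_ _ (mem_nth [::] yl)) /allP /(_ x xin) := ancsF_bound [:: t].
  by rewrite fsize1.
rewrite /adm_mask ancsF_cons size_cat s1 s2 iotaD all_cat add0n.
rewrite (_ : iota (tsize t) _ = map (addn (tsize t)) (iota 0 (fsize u))); last first.
  by rewrite -iotaDl addn0.
rewrite all_map; congr andb.
  apply: eq_in_all => y; rewrite mem_iota add0n => /andP [_ yl].
  rewrite nth_cat s1 yl nth_cat sA1 yl; case: (nth false _ y) => //=.
  by apply: eq_in_all => x /in_t xl; rewrite nth_cat s1 xl (leq_trans xl (leq_addr _ _)).
apply: eq_in_all => y; rewrite mem_iota add0n => /andP [_ yl] /=.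
rewrite !nth_cat s1 sA1 ltnNge leq_addr /= addKn (nth_map [::]) ?size_ancsF //.
case: (nth false _ y) => //=; rewrite all_map; apply: eq_all => x /=.
by rewrite ltn_add2l nth_cat s1 (ltnNge (tsize t + x)) leq_addr /= addKn.
Qed.

Lemma adm_mask_Node cs b m : size m = fsize cs ->
  adm_mask (ancsF [:: Node cs]) (b :: m) = adm_mask (ancsF cs) m && (b || all negb m).
Proof.
move=> sm; have all_unselected (c : bool) :
    all (fun y => nth false m y ==> c) (iota 0 (size m)) = c || all negb m.
  case: c; first by apply/allP => y _; rewrite implybT.
  apply/allP/all_nthP => /= [H i il | H y].
    by have := H i; rewrite mem_iota il implybF; exact.
  by rewrite mem_iota add0n => /andP [_ yl]; rewrite implybF; exact: H.
rewrite /adm_mask ancsF_Node /= implybT /= -[1]addn0 iotaDl all_map.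
rewrite -all_unselected -all_predI; apply: eq_in_all => y.
rewrite mem_iota add0n => /andP [_ yl] /=; rewrite add0n (nth_map [::]) ?size_ancsF -?sm //.
rewrite all_cat all_map /= andbT.
by case: (nth false m y) => //=; case: b; rewrite ?andbT ?andbF.
Qed.

Local Open Scope ring_scope.

Lemma sum_masks_add (R : nmodType) k l (H : bitseq -> R) :
  \sum_(m <- masks (k + l)) H m = \sum_(m1 <- masks k) \sum_(m2 <- masks l) H (m1 ++ m2).
Proof.
elim: k H => [|k IH] H; first by rewrite add0n big_seq1.
by rewrite addSn /= !big_cat !big_map !IH.
Qed.

Lemma sum_masks_single (R : nmodType) n x (P : pred bitseq) (H : bitseq -> R) :
  size x = n -> (forall m, size m = n -> P m = (m == x)) ->
  \sum_(m <- masks n | P m) H m = H x.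
Proof.
move=> sx HP; rewrite big_seq_cond (eq_bigl (pred1 x)).
  by rewrite -big_filter filter_pred1_uniq ?uniq_masks ?mem_masks ?sx // big_seq1.
move=> m /=; rewrite mem_masks; case: eqP => [/HP -> //| sm].
by apply/esym/eqP => mx; apply: sm; rewrite mx.
Qed.

Lemma cut_sum_nil (R : nmodType) (G : forest -> forest -> R) :
  cut_sum [::] G = G [::] [::].
Proof. by rewrite /cut_sum /= big_cons big_nil /= addr0. Qed.

Lemma cut_sum_cons (R : nmodType) t u (G : forest -> forest -> R) :
  cut_sum (t :: u) G =
  \sum_(m1 <- masks (tsize t) | adm_mask (ancsF [:: t]) m1)
  \sum_(m2 <- masks (fsize u) | adm_mask (ancsF u) m2)
     G ((restrF [:: t] (map negb m1)).1 ++ (restrF u (map negb m2)).1)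
       ((restrF [:: t] m1).1 ++ (restrF u m2).1).
Proof.
rewrite /cut_sum fsize_cons big_mkcond sum_masks_add [RHS]big_mkcond.
apply: eq_big_seq => m1; rewrite mem_masks => /eqP s1.
case: ifP => a1.
  rewrite [RHS]big_mkcond; apply: eq_big_seq => m2; rewrite mem_masks => /eqP s2.
  by rewrite adm_mask_cons // a1 /= map_cat !restrF_cons ?size_map.
by apply: big1_seq => m2; rewrite mem_masks => /andP [_ /eqP s2]; rewrite adm_mask_cons // a1.
Qed.

(* Delta_CK(B_+(cs)) = B_+(cs) (x) 1 + (id (x) B_+) Delta_CK(cs): either the
   root is cut off with everything, or it stays in the trunk. *)
Lemma cut_sum_Node (R : nmodType) cs (G : forest -> forest -> R) :
  cut_sum [:: Node cs] G = G [:: Node cs] [::] + cut_sum cs (fun v w => G v [:: Node w]).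
Proof.
rewrite /cut_sum fsize_Node [masks _.+1]/= big_cat !big_map [LHS]addrC; congr (_ + _).
  rewrite (@sum_masks_single _ _ (nseq (fsize cs) false)) ?size_nseq //.
    by rewrite map_cons map_nseq !restrF_Node_cons !restrF_nseq.
  move=> m sm; rewrite adm_mask_Node //=; apply/andP/eqP => [[_ none]|->].
    by rewrite -sm; apply/all_pred1P; apply: sub_all none => -[].
  by rewrite adm_mask_nseq all_nseq orbT.
rewrite big_seq_cond [RHS]big_seq_cond; apply: eq_big => m.
  by case: (boolP (m \in _)) => //; rewrite mem_masks => /eqP sm; rewrite adm_mask_Node // andbT.
by move=> _; rewrite !restrF_Node_cons.
Qed.

Section Convolution.
Variable F : fieldType.

Definition character (f : forest -> F) : Prop :=
  f [::] = 1 /\ forall t u, f (t :: u) = f [:: t] * f u.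

Lemma character_cat f u v : character f -> f (u ++ v) = f u * f v.
Proof.
move=> [f0 fcons]; elim: u => [|t u IH] /=; first by rewrite f0 mul1r.
by rewrite fcons IH mulrA -fcons.
Qed.

Lemma character_epsilon : character (epsilon F).
Proof. by split=> // t u; rewrite mul0r. Qed.

Lemma character_delta : character (delta F).
Proof. by split=> [|t u]; rewrite /delta ?big_nil // !big_cons big_nil mulr1. Qed.

(* The convolution of two characters is a character (Delta_CK is an algebra
   morphism). *)
Lemma character_conv f g : character f -> character g -> character (conv f g).
Proof.
move=> cf cg; split=> [|t u].
  by rewrite conv_cut_sum cut_sum_nil cf.1 cg.1 mulr1.
rewrite !conv_cut_sum !cut_sum_cons mulr_suml; apply: eq_bigr => m1 _.
rewrite mulr_sumr /= big_cons big_nil /= addr0 !cats0; apply: eq_bigr => m2 _.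
by rewrite !(character_cat _ _ cf) !(character_cat _ _ cg) mulrACA.
Qed.

(* The counit is a left unit of the convolution: only the cut with V empty
   contributes. *)
Lemma conv_epsilonl g u : conv (epsilon F) g u = g u.
Proof.
set full := nseq (fsize u) true.
rewrite conv_cut_sum /cut_sum big_seq_cond.
rewrite (eq_bigr (fun m => if m == full then g u else 0)) => [|m /andP [+ _]].
  rewrite -big_seq_cond -big_mkcondr (sum_masks_single (x := full)) ?size_nseq //.
  by move=> m sm; case: eqP => [->|]; rewrite ?andbF ?andbT ?adm_mask_nseq.
rewrite mem_masks => /eqP sm; case: eqP => [->|not_full].
  by rewrite map_nseq !restrF_nseq mul1r.
case Vm: (restrF u (map negb m)).1 => [|t v]; last by rewrite mul0r.
move/restrF_nil: Vm; rewrite size_map => /(_ sm) /(congr1 (map negb)).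
by rewrite mapK ?map_nseq // => -[].
Qed.

Lemma eq_conv (f1 f2 g1 g2 : forest -> F) u :
  f1 =1 f2 -> g1 =1 g2 -> conv f1 g1 u = conv f2 g2 u.
Proof. by move=> ef eg; apply: eq_bigr => W _; rewrite ef eg. Qed.

Lemma conv_addl (f1 f2 g : forest -> F) u :
  conv (fun v => f1 v + f2 v) g u = conv f1 g u + conv f2 g u.
Proof. by rewrite /conv -big_split; apply: eq_bigr => W _; rewrite mulrDl. Qed.

Lemma conv_sumr (f : forest -> F) (I : Type) (r : seq I) (c : I -> F)
    (G : I -> forest -> F) u :
  conv f (fun w => \sum_(i <- r) c i * G i w) u = \sum_(i <- r) c i * conv f (G i) u.
Proof.
rewrite /conv; under eq_bigr do rewrite mulr_sumr.
rewrite exchange_big; apply: eq_bigr => i _; rewrite mulr_sumr.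
by apply: eq_bigr => W _; rewrite mulrCA.
Qed.

(* delta - epsilon, the reduced part of delta; it vanishes on the empty
   forest, so its convolution powers are locally nilpotent. *)
Definition delta_red (v : forest) : F := delta F v - epsilon F v.

Lemma convpow_delta_red_small n u : (fsize u < n)%N -> convpow delta_red n u = 0.
Proof.
elim: n u => [|n IH] u //= un; rewrite conv_cut_sum /cut_sum big_seq_cond.
apply: big1 => m /andP [+ _]; rewrite mem_masks => /eqP sm.
case Vm: (restrF u (map negb m)).1 => [|t v].
  by rewrite /delta_red /delta big_nil subrr mul0r.
rewrite IH ?mulr0 //; have := fsize_restrF_split sm; rewrite Vm fsize_cons.
have : (0 < tsize t)%N by case: t {Vm}.
lia.
Qed.

(* The binomial formula delta^{*m} = (epsilon + delta_red)^{*m}. *)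
Lemma convpow_delta_binomial m u :
  convpow (delta F) m u = \sum_(n < m.+1) 'C(m, n)%:R * convpow delta_red n u.
Proof.
elim: m u => [|m IH] u; first by rewrite big_ord1 mul1r.
rewrite /= (@eq_conv _ (fun v => epsilon F v + delta_red v) _ _ u _ IH); last first.
  by move=> v; rewrite /delta_red addrC subrK.
rewrite conv_addl conv_epsilonl conv_sumr big_ord_recl [in RHS]big_ord_recl.
under [in RHS]eq_bigr do rewrite binS natrD mulrDl.
rewrite big_split /= addrA bin0 [in RHS]bin0; congr (_ + _).
rewrite [in RHS]big_ord_recr /= bin_small // mul0r addr0.
by congr (_ + _); apply: eq_bigr.
Qed.
End Convolution.

Section DeltaPowers.
Variable F : fieldType.

(* Phi_m = delta^{*m}; on forests it counts the maps to {0,...,m-1} that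
   strictly increase along the edges, whence the recursion on B_+. *)
Definition Phi (m : nat) : forest -> F := convpow (delta F) m.

Lemma character_Phi m : character (Phi m).
Proof.
elim: m => [|m IH]; first exact: character_epsilon.
exact: character_conv (character_delta F) IH.
Qed.

Lemma Phi_cat m u v : Phi m (u ++ v) = Phi m u * Phi m v.
Proof. exact: character_cat (character_Phi m). Qed.

Lemma Phi_Node m cs : Phi m [:: Node cs] = \sum_(j < m) Phi j cs.
Proof.
elim: m cs => [|m IH] cs; first by rewrite big_ord0.
rewrite [LHS]/Phi /= conv_cut_sum cut_sum_Node -/(Phi m) (character_Phi m).1.
rewrite mulr1 big_ord_recl.
congr (_ + _); first by rewrite /delta big_seq1; case: cs.
rewrite /cut_sum; under eq_bigr do rewrite IH mulr_sumr.
by rewrite exchange_big; apply: eq_bigr => j _; rewrite [RHS]conv_cut_sum.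
Qed.

(* Splitting the pairs (i, j) of the square {0..m-1}^2 as i < j, j < i, i = j. *)
Lemma mul_sums_split (A B : nat -> F) m :
  \sum_(j < m) (A j * \sum_(i < j) B i) + \sum_(j < m) (B j * \sum_(i < j) A i)
  + \sum_(j < m) (A j * B j) = (\sum_(j < m) A j) * (\sum_(j < m) B j).
Proof.
elim: m => [|m IH]; first by rewrite !big_ord0 !addr0 mulr0.
by rewrite !big_ord_recr /= mulrDl !mulrDr -IH; ring.
Qed.

Lemma Phi_bowtie m a b :
  Phi m [:: circ a b] + Phi m [:: circ b a] + Phi m [:: times a b] =
  Phi m [:: a] * Phi m [:: b].
Proof.
case: a => fa; case: b => fb /=; rewrite !Phi_Node.
rewrite -(mul_sums_split (fun j => Phi j fa) (fun j => Phi j fb)).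
by congr (_ + _ + _); apply: eq_bigr => j _; rewrite -?cats1 Phi_cat // Phi_Node.
Qed.
End DeltaPowers.

Section Interpolation.
Variable F : fieldType.
Hypothesis charF0 : [pchar F] =i pred0.

Lemma natrS_neq0 k : k.+1%:R != 0 :> F.
Proof. by rewrite ((pcharf0P F).1 charF0). Qed.

Lemma natr_inj : injective (fun n : nat => n%:R : F).
Proof.
move=> i j /= e; wlog ij : i j e / (i <= j)%N.
  by move=> H; case: (leqP i j) => [|/ltnW] /H ->.
have : (j - i)%:R == 0 :> F by rewrite natrB // e subrr.
by rewrite ((pcharf0P F).1 charF0) subn_eq0 => ji; apply/eqP; rewrite eqn_leq ij.
Qed.

Lemma poly_nat_eq0 (p : {poly F}) : (forall m, p.[m%:R] = 0) -> p = 0.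
Proof.
move=> p_nat; apply/eqP; apply: contraT => p_neq0.
have := max_poly_roots p_neq0 (rs := [seq i%:R | i <- iota 0 (size p)]).
rewrite size_map size_iota ltnn; apply; last by rewrite (map_inj_uniq natr_inj) iota_uniq.
by apply/allP => x /mapP [i _ ->]; rewrite rootE p_nat.
Qed.

Fixpoint binom_poly (n : nat) : {poly F} :=
  if n is k.+1 then binom_poly k * (('X - k%:R%:P) * (k.+1%:R^-1)%:P) else 1.

Lemma binom_poly_nat n m : (binom_poly n).[m%:R] = 'C(m, n)%:R.
Proof.
elim: n => [|n IH] /=; first by rewrite hornerC bin0.
rewrite hornerM IH hornerM hornerXsubC hornerC.
case: (leqP n m) => nm; last by rewrite bin_small // (bin_small (ltnW _)) // !mul0r.
rewrite -natrB // mulrA -natrM mulnC -mul_bin_left natrM mulrC mulrA.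
by rewrite mulVf ?mul1r ?natrS_neq0.
Qed.

(* The derivative at 0 of the n-th binomial polynomial is (-1)^(n+1)/n,
   the n-th coefficient of log(1 + x). *)
Lemma binom_poly_deriv0 n :
  (binom_poly n)^`().[0] = if n is 0 then 0 else (-1) ^+ n.+1 / n%:R.
Proof.
elim: n => [|n IH]; first by rewrite /= derivC horner0.
rewrite /= derivM !derivM derivXsubC derivC mulr0 addr0 mul1r hornerD !hornerM IH.
have -> : (binom_poly n).[0] = (n == 0)%:R by rewrite -bin0n -binom_poly_nat.
rewrite hornerXsubC !hornerC; case: n {IH} => [|k] /=.
  by rewrite mul0r add0r expr2 mulN1r opprK.
rewrite mul0r addr0 sub0r mulNr mulrN mulrA divfK ?natrS_neq0 //.
by rewrite [in RHS]exprS mulN1r mulNr.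
Qed.

(* The polynomial interpolating m |-> Phi_m(u); omega(u) is its derivative
   at 0, since omega = log(epsilon + delta_red). *)
Definition omega_poly (u : forest) : {poly F} :=
  \sum_(n < (fsize u).+1) convpow (delta_red F) n u *: binom_poly n.

Lemma omega_poly_nat m u : (omega_poly u).[m%:R] = Phi F m u.
Proof.
rewrite /omega_poly horner_sum /Phi convpow_delta_binomial.
under eq_bigr do rewrite hornerZ binom_poly_nat mulrC.
set c := fun n => 'C(m, n)%:R * convpow (delta_red F) n u.
have widen k K : (k <= K)%N -> (forall i, (k <= i)%N -> c i = 0) ->
    \sum_(i < K) c i = \sum_(i < k) c i.
  move=> kK c0; rewrite [RHS](big_ord_widen K c kK) [RHS]big_mkcond.
  by apply: eq_bigr => i _; case: leqP => // /c0.
pose K := ((fsize u).+1 + m.+1)%N.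
rewrite -(widen _ K (leq_addr _ _)) => [|i ui]; last first.
  by rewrite /c convpow_delta_red_small // mulr0.
by rewrite (widen _ K (leq_addl _ _)) // => i mi; rewrite /c bin_small // mul0r.
Qed.

Lemma omegaE u : omega F u = (omega_poly u)^`().[0].
Proof.
rewrite /omega_poly (big_morph _ (@derivD F) (deriv0 F)) horner_sum.
under eq_bigr do rewrite derivZ hornerZ binom_poly_deriv0.
rewrite big_ord_recl mulr0 add0r /omega big_add1 big_mkord.
by apply: eq_bigr => i _; rewrite mulrC.
Qed.

Lemma omega_poly_bowtie a b :
  omega_poly [:: circ a b] + omega_poly [:: circ b a] + omega_poly [:: times a b] =
  omega_poly [:: a] * omega_poly [:: b].
Proof.
apply/subr0_eq/poly_nat_eq0 => m.
by rewrite hornerD hornerN hornerM !hornerD !omega_poly_nat Phi_bowtie subrr.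
Qed.

(* Phi_0 = epsilon vanishes on trees. *)
Lemma omega_poly_tree0 t : (omega_poly [:: t]).[0] = 0.
Proof. exact: omega_poly_nat 0 [:: t]. Qed.
End Interpolation.

(* omega(a o b) + omega(b o a) + omega(a x b) = (P_a P_b)'(0)
   = P_a'(0) P_b(0) + P_a(0) P_b'(0) = 0, as P_a(0) = P_b(0) = 0. *)
Theorem mainTheorem18 (F : fieldType) (charF0 : [pchar F] =i pred0)
  (a b : tree) :
  omega_lin F (bowtie a b) = 0.
Proof.
rewrite /omega_lin /bowtie !big_cons big_nil addr0 !omegaE // addrA.
rewrite -!hornerD -!derivD omega_poly_bowtie // derivM hornerD !hornerM.
by rewrite !omega_poly_tree0 // mulr0 mul0r addr0.
Qed.
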